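(* Let $G_1=(V,D_1)$ and $G_2=(V,D_2)$ be directed graphs with the same Jacobian matroid. If two nodes $i\neq j$ are adjacent or have a common child in one of the graphs, then they are adjacent or have a common child in the other graph.
   Context: A directed graph $G=(V,D)$ has edge set $D\subseteq V\times V$ of ordered pairs $(i,j)$, $i\neq j$. $\Lambda$ is the $V\times V$ matrix with indeterminate entries $\lambda_{ij}$ for $(i,j)\in D$ and zeros elsewhere, and $s$ is a further indeterminate. Let $\psi_G(\Lambda,s)=s(I-\Lambda)(I-\Lambda)^T=K$. The transposed Jacobian $J(\psi_G)$ has rows indexed by $\{\lambda_{kl}:(k,l)\in D\}\cup\{s\}$ and columns indexed by $K_{ij}$, $i\le j$, with entries $\partial K_{ij}/\partial\theta$. The Jacobian matroid of $G$ is the matroid on the column labels $\{K_{ij}\}$ in which a set is independent iff its columns are linearly independent over $\mathbb{R}(\lambda,s)$. *)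

From HB Require Import structures.
From mathcomp Require Import all_boot all_order all_algebra.
From mathcomp Require Import fraction.
From mathcomp Require Import mpoly.
From mathcomp Require Import reals.
Set Implicit Arguments. Unset Strict Implicit. Unset Printing Implicit Defensive.
Import Order.TTheory GRing.Theory Num.Theory.
Local Open Scope ring_scope.

Section Jacobian.
Variables (R : realType) (n : nat).

Definition loopless (D : {set 'I_n * 'I_n}) := forall i : 'I_n, (i, i) \notin D.

(* polynomial ring in the indeterminates lambda_kl ((k,l) in V x V) and s *)
Definition nvars := (n * n).+1.
Definition PR := {mpoly R[nvars]}.
Definition FR := {fraction PR}.

Definition lam_idx (k l : 'I_n) : 'I_nvars :=
  widen_ord (leqnSn _) (mxvec_index k l).
Definition s_idx : 'I_nvars := ord_max.

Definition Lambda (D : {set 'I_n * 'I_n}) : 'M[PR]_n :=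
  \matrix_(k, l) (if (k, l) \in D then 'X_(lam_idx k l) else 0).

Definition Kmat (D : {set 'I_n * 'I_n}) : 'M[PR]_n :=
  'X_s_idx *: ((1%:M - Lambda D) *m (1%:M - Lambda D)^T).

(* column labels K_ij with i <= j *)
Definition Klab := {p : 'I_n * 'I_n | (p.1 <= p.2)%N}.

(* transposed Jacobian: rows indexed by variables, columns by labels,
   entries in the fraction field R(lambda, s) *)
Definition jac (D : {set 'I_n * 'I_n}) (v : 'I_nvars) (c : Klab) : FR :=
  @tofrac PR ((Kmat D (sval c).1 (sval c).2)^`M(v)).

Definition jac_indep (D : {set 'I_n * 'I_n}) (S : {set Klab}) : Prop :=
  forall a : Klab -> FR,
    (forall v : 'I_nvars, \sum_(c in S) a c * jac D v c = 0) ->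
    forall c, c \in S -> a c = 0.

Definition same_jacobian_matroid (D1 D2 : {set 'I_n * 'I_n}) : Prop :=
  forall S : {set Klab}, jac_indep D1 S <-> jac_indep D2 S.

Definition adjacent (D : {set 'I_n * 'I_n}) (i j : 'I_n) : Prop :=
  ((i, j) \in D) \/ ((j, i) \in D).

Definition common_child (D : {set 'I_n * 'I_n}) (i j : 'I_n) : Prop :=
  exists k : 'I_n, ((i, k) \in D) /\ ((j, k) \in D).

End Jacobian.

From HB Require Import structures.
From mathcomp Require Import all_boot all_order all_algebra.
From mathcomp Require Import fraction mpoly reals.
From Stdlib Require Import Classical.
Set Implicit Arguments. Unset Strict Implicit. Unset Printing Implicit Defensive.
Import Order.TTheory GRing.Theory Num.Theory.
Local Open Scope ring_scope.

(* For i <> j, K_ij = s (sum_k l_ik l_jk - l_ij - l_ji) only involves the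
   edge variables of D, so it vanishes identically unless i and j are adjacent
   in the moral graph (adjacent, or parents of a common child).  Conversely, if
   they are, evaluating dK_ij/ds at s = 0 and at the 0/1 indicator of a
   witnessing edge or pair of edges gives -1 or 1.  Hence the singleton {K_ij}
   is independent in the Jacobian matroid exactly when i and j are moral
   neighbours, which the matroid therefore determines. *)

Definition concentration (T : pzRingType) m (A : 'M[T]_m) : 'M[T]_m :=
  (1%:M - A) *m (1%:M - A)^T.

Lemma concentration_offdiag (T : pzRingType) m (A : 'M[T]_m) (i j : 'I_m) :
  i != j -> concentration A i j = \sum_k A i k * A j k - A j i - A i j.
Proof.
move=> nij; rewrite /concentration raddfB /= trmx1.
rewrite mulmxBl !mulmxBr !mul1mx mulmx1 !mxE (negPf nij) sub0r.
rewrite (eq_bigr (fun k => A i k * A j k)) => [|k _]; last by rewrite mxE.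
by rewrite opprB addrA (addrC (- _)).
Qed.

Lemma map_concentration (T U : pzRingType) (f : {rmorphism T -> U}) m (A : 'M[T]_m) :
  map_mx f (concentration A) = concentration (map_mx f A).
Proof. by rewrite /concentration map_mxM -map_trmx map_mxB map_mx1. Qed.

Lemma concentrationC (T : comPzRingType) m (A : 'M[T]_m) i j :
  concentration A i j = concentration A j i.
Proof. by rewrite !mxE; apply: eq_bigr => k _; rewrite !mxE mulrC. Qed.

Lemma meval_mderiv_mulX (T : comNzRingType) k (v : 'I_k -> T) (x : 'I_k) (p : {mpoly T[k]}) :
  v x = 0 -> meval v (('X_x * p)^`M(x)) = meval v p.
Proof.
move=> vx0; rewrite mderivM mevalD !mevalM mevalXU vx0 mul0r addr0.
rewrite mderivX mevalZ mevalX mnm1E eqxx mul1r big1 ?mul1r // => y _.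
by rewrite mnmBE subnn expr0.
Qed.

Section MoralGraph.
Variables (R : realType) (n : nat).
Implicit Types (D E : {set 'I_n * 'I_n}) (i j k l : 'I_n).

Definition moral_adjacent D i j := adjacent D i j \/ common_child D i j.

Lemma moral_adjacent_sym D i j : moral_adjacent D i j <-> moral_adjacent D j i.
Proof.
by split=> -[[ij | ji] | [k [ik jk]]]; [left; right | left; left | right; exists k |
  left; right | left; left | right; exists k].
Qed.

Lemma KmatE D i j :
  Kmat R D i j = 'X_(s_idx n) * concentration (Lambda R D) i j.
Proof. by rewrite mxE. Qed.

Lemma Kmat_eq0 D i j : i != j -> ~ moral_adjacent D i j -> Kmat R D i j = 0.
Proof.
move=> nij not_moral; rewrite KmatE concentration_offdiag // !mxE.
have /negPf-> : (j, i) \notin D by apply/negP => ji; apply: not_moral; left; right.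
have /negPf-> : (i, j) \notin D by apply/negP => ij; apply: not_moral; left; left.
rewrite big1 ?subr0 ?mulr0 // => k _; rewrite !mxE.
case: ifP => ik; case: ifP => jk; rewrite ?mul0r ?mulr0 //.
by case: not_moral; right; exists k.
Qed.

Lemma lam_idx_inj k l k' l' : lam_idx k l = lam_idx k' l' -> (k, l) = (k', l').
Proof.
by rewrite /lam_idx /mxvec_index => /(congr1 val) /= /val_inj; apply: enum_rank_inj.
Qed.

Lemma lam_idx_neq_s k l : lam_idx k l != s_idx n.
Proof. by rewrite -val_eqE /= (ltn_eqF (ltn_ord (mxvec_index k l))). Qed.

Definition edge_point E (v : 'I_(nvars n)) : R :=
  [exists p in E, v == lam_idx p.1 p.2]%:R.

Lemma edge_point_lam E k l : edge_point E (lam_idx k l) = ((k, l) \in E)%:R.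
Proof.
congr (nat_of_bool _)%:R; apply/existsP/idP => [[[k' l'] /andP[kl' /eqP]]|kl].
  by move/lam_idx_inj => ->.
by exists (k, l); rewrite kl eqxx.
Qed.

Lemma edge_point_s E : edge_point E (s_idx n) = 0.
Proof.
rewrite /edge_point; case: existsP => // -[p /andP[_ /eqP sp]].
by move: (lam_idx_neq_s p.1 p.2); rewrite -sp eqxx.
Qed.

Definition adjmx E : 'M[R]_n := \matrix_(k, l) ((k, l) \in E)%:R.

Lemma map_Lambda_edge_point D E :
  E \subset D -> map_mx (meval (edge_point E)) (Lambda R D) = adjmx E.
Proof.
move=> sED; apply/matrixP => k l; rewrite !mxE.
case: ifP => kl; first by rewrite mevalXU edge_point_lam.
by rewrite meval0; have /negPf-> : (k, l) \notin E by apply: contraFN kl => /(subsetP sED).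
Qed.

Lemma meval_Kmat_mderiv_s D E i j : E \subset D ->
  meval (edge_point E) ((Kmat R D i j)^`M(s_idx n)) = concentration (adjmx E) i j.
Proof.
move=> sED; rewrite KmatE meval_mderiv_mulX ?edge_point_s //.
by rewrite -(map_Lambda_edge_point sED) -map_concentration [RHS]mxE.
Qed.

Lemma concentration_adjmx_edge i j :
  i != j -> concentration (adjmx [set (i, j)]) i j = -1.
Proof.
move=> nij; rewrite concentration_offdiag // big1 => [|k _];
  rewrite !mxE !inE !xpair_eqE ?(negPf nij) ?(eq_sym j i) ?(negPf nij) /= ?eqxx ?mulr0 //.
by rewrite subr0 sub0r.
Qed.

Lemma concentration_adjmx_cochild i j c : i != j -> c != i -> c != j ->
  concentration (adjmx [set (i, c); (j, c)]) i j = 1.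
Proof.
move=> nij nci ncj; have nji : j != i by rewrite eq_sym.
rewrite concentration_offdiag // (bigD1 c) //= big1 => [|k nkc];
  rewrite !mxE !inE !xpair_eqE !eqxx ?(negPf nij) ?(negPf nji) ?(negPf nkc)
    ?(eq_sym i c) ?(eq_sym j c) ?(negPf nci) ?(negPf ncj) /= ?mulr0 //.
by rewrite mulr1 addr0 !subr0.
Qed.

Lemma moral_adjacent_witness D i j : loopless D -> i != j -> moral_adjacent D i j ->
  exists2 E : {set 'I_n * 'I_n}, E \subset D & concentration (adjmx E) i j != 0.
Proof.
move=> lD nij [[ij | ji] | [c [ic jc]]].
- exists [set (i, j)]; first by rewrite sub1set.
  by rewrite concentration_adjmx_edge // oppr_eq0 oner_eq0.
- exists [set (j, i)]; first by rewrite sub1set.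
  by rewrite concentrationC concentration_adjmx_edge ?oppr_eq0 ?oner_eq0 // eq_sym.
- have nci : c != i by apply: contraTneq ic => ->; apply: lD.
  have ncj : c != j by apply: contraTneq jc => ->; apply: lD.
  exists [set (i, c); (j, c)]; last by rewrite concentration_adjmx_cochild // oner_eq0.
  by apply/subsetP => p; rewrite !inE => /orP[] /eqP->.
Qed.

Lemma moral_adjacent_mderiv_neq0 D i j : loopless D -> i != j ->
  moral_adjacent D i j <-> exists v, (Kmat R D i j)^`M(v) != 0.
Proof.
move=> lD nij; split=> [/(moral_adjacent_witness lD nij) [E sED conc_neq0] | [v dK]].
  exists (s_idx n); apply: contra_neq conc_neq0 => dK0.
  by rewrite -(meval_Kmat_mderiv_s i j sED) dK0 meval0.
by apply: NNPP => not_moral; move: dK; rewrite Kmat_eq0 // mderiv0 eqxx.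
Qed.

Lemma jac_indep_set1 D (c : Klab n) :
  jac_indep R D [set c] <-> exists v, jac R D v c != 0.
Proof.
split=> [indep | [v jac_neq0] a a_col0 c']; last first.
  rewrite inE => /eqP->; apply/eqP.
  by have /eqP := a_col0 v; rewrite big_set1 mulf_eq0 (negPf jac_neq0) orbF.
apply: NNPP => /not_ex_all_not col0.
have col_indep v : \sum_(c' in [set c]) 1 * jac R D v c' = 0.
  by rewrite big_set1 mul1r; apply/eqP/negPn/negP; exact: col0.
by move/eqP: (indep (fun=> 1) col_indep c (set11 c)); rewrite oner_eq0.
Qed.

Lemma moral_adjacent_jac_indep D i j (le_ij : (i <= j)%N) : loopless D -> i != j ->
  moral_adjacent D i j <-> jac_indep R D [set exist _ (i, j) le_ij].
Proof.
move=> lD nij; rewrite jac_indep_set1 moral_adjacent_mderiv_neq0 //.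
by split=> -[v dv]; exists v; rewrite /jac tofrac_eq0 in dv *.
Qed.

End MoralGraph.

Theorem lemma3p6 (R : realType) (n : nat) (D1 D2 : {set 'I_n * 'I_n}) :
  loopless D1 -> loopless D2 ->
  same_jacobian_matroid R D1 D2 ->
  forall i j : 'I_n, i != j ->
    (adjacent D1 i j \/ common_child D1 i j) <->
    (adjacent D2 i j \/ common_child D2 i j).
Proof.
move=> l1 l2 same_matroid i j nij.
change (moral_adjacent D1 i j <-> moral_adjacent D2 i j).
wlog le_ij : i j nij / (i <= j)%N => [hwlog|].
  case: (leqP i j) => [|/ltnW le_ji]; first exact: hwlog.
  by rewrite !(moral_adjacent_sym _ i) hwlog // eq_sym.
rewrite (moral_adjacent_jac_indep R le_ij l1 nij) (moral_adjacent_jac_indep R le_ij l2 nij).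
exact: same_matroid.
Qed.
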